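(* Let $R$ and $B$ be disjoint finite sets of points in the plane such that no three points of $R\cup B$ are collinear, and let $f:R\to\{2,3,4,\ldots\}$ be a function. If $2\le |B|\le \sum_{x\in R}(f(x)-2)+2$, then there exists a non-crossing geometric spanning tree $T$ on $R\cup B$ such that the set of leaves of $T$ is exactly $B$ and $2\le \deg_T(x)\le f(x)$ for every $x\in R$. Moreover, if $|B|=\sum_{x\in R}(f(x)-2)+2$, then $T$ satisfies $\deg_T(x)=f(x)$ for every $x\in R$.
   Context: The points of $R$ are called red and those of $B$ blue. A geometric spanning tree on a point set $P$ is a tree with vertex set $P$ whose edges are drawn as straight-line segments between their endpoints; it is non-crossing if no two edges intersect except at a common endpoint. $\deg_T(v)$ denotes the degree of vertex $v$ in $T$, and a leaf is a vertex of degree one. *)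

From HB Require Import structures.
From mathcomp Require Import all_boot all_order all_algebra.
From mathcomp Require Import reals.
Set Implicit Arguments. Unset Strict Implicit. Unset Printing Implicit Defensive.
Import Order.TTheory GRing.Theory Num.Theory.
Local Open Scope ring_scope.

Section Geom.
Variable R : realType.
Definition point := (R * R)%type.

Definition collinear (a b c : point) : bool :=
  (b.1 - a.1) * (c.2 - a.2) - (b.2 - a.2) * (c.1 - a.1) == 0.

Definition no_three_collinear (P : seq point) : Prop :=
  forall a b c, a \in P -> b \in P -> c \in P ->
    a != b -> b != c -> a != c -> ~~ collinear a b c.

Definition on_segment (a b p : point) : Prop :=
  exists t : R, 0 <= t <= 1 /\
    p = ((1 - t) * a.1 + t * b.1, (1 - t) * a.2 + t * b.2).

(* Edges of a geometric graph: a list of (unordered) pairs of points. *)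
Definition adj (T : seq (point * point)) (x y : point) : bool :=
  ((x, y) \in T) || ((y, x) \in T).

Definition deg (T : seq (point * point)) (v : point) : nat :=
  count (fun e => (e.1 == v) || (e.2 == v)) T.

Definition simple_graph_on (P : seq point) (T : seq (point * point)) : Prop :=
  [/\ forall e, e \in T -> [/\ e.1 \in P, e.2 \in P & e.1 != e.2],
      uniq T &
      forall e, e \in T -> (e.2, e.1) \notin T].

Definition connected_on (P : seq point) (T : seq (point * point)) : Prop :=
  forall x y, x \in P -> y \in P ->
    exists p : seq point, path (adj T) x p /\ last x p = y.

Definition acyclic (T : seq (point * point)) : Prop :=
  forall c : seq point, (3 <= size c)%N -> uniq c -> ~~ cycle (adj T) c.

Definition spanning_tree (P : seq point) (T : seq (point * point)) : Prop :=
  [/\ simple_graph_on P T, connected_on P T & acyclic T].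

Definition non_crossing (T : seq (point * point)) : Prop :=
  forall e1 e2, e1 \in T -> e2 \in T -> e1 != e2 ->
    forall p, on_segment e1.1 e1.2 p -> on_segment e2.1 e2.2 p ->
      ((p == e1.1) || (p == e1.2)) && ((p == e2.1) || (p == e2.2)).

End Geom.

From HB Require Import structures.
From mathcomp Require Import all_boot all_order all_algebra.
From mathcomp Require Import reals.
From mathcomp Require Import ring lra zify.
Set Implicit Arguments. Unset Strict Implicit. Unset Printing Implicit Defensive.
Import Order.TTheory GRing.Theory Num.Theory.

(* Only the degree sequence matters: give each blue point degree 1 and each red
   point x a degree g x in [2, f x] with sum (g x - 2) = |B| - 2, so that the
   degrees sum to 2n - 2.  Any positive degree sequence summing to 2n - 2 on
   n >= 2 points in general position is realized by a non-crossing spanning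
   tree.  Take the lexicographically lowest point p and sort the others by angle
   around p.  As the partial degree sums move in steps of at least one, some
   line through p and one of the points splits the set into two smaller parts
   whose degree sequences again sum to 2m - 2, once the degree of the vertex
   shared by both parts is divided between them.  The two trees given by
   induction lie in opposite closed half-planes and meet only at the shared
   vertex, so their union is again a non-crossing spanning tree. *)

Section WeightedSplits.
Variables (T : Type) (d : T -> nat).

Lemma split_at_leaf (q : seq T) k : all (fun x => 0 < d x) q -> 2 <= k ->
  k + \sum_(x <- q) d x = 2 * size q ->
  exists L a b Rr, [/\ q = L ++ a :: b :: Rr, \sum_(x <- L) d x = 2 * size L & d a = 1].
Proof.
move=> d_pos k_ge2; suff /(_ 0) : forall e, e + k + \sum_(x <- q) d x = 2 * size q ->
    exists L a b Rr, [/\ q = L ++ a :: b :: Rr, e + \sum_(x <- L) d x = 2 * size L & d a = 1].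
  by move=> split_q /split_q [L [a [b [Rr []]]]]; exists L, a, b, Rr.
elim: q d_pos => [|x q IHq] d_pos e; rewrite ?big_nil ?big_cons /=; first by lia.
case/andP: d_pos => dx_gt0 /IHq {}IHq.
have [dx_ge|dx_lt] := leqP 2 (e + d x) => sum_q.
  have [|L [a [b [Rr [-> sum_L da]]]]] := IHq (e + d x - 2); first by lia.
  by exists (x :: L), a, b, Rr; rewrite big_cons /=; split=> //; lia.
case: q {IHq} sum_q => [|b Rr]; rewrite ?big_nil /=; first by lia.
by exists [::], x, b, Rr; rewrite big_nil /=; split=> //; lia.
Qed.

Lemma split_at_deficit (q : seq T) e : all (fun x => 0 < d x) q -> 0 < e ->
  1 < e + size q -> \sum_(x <- q) d x + 1 = 2 * size q + e ->
  exists L c Rr X, [/\ q = L ++ c :: Rr, 0 < X < d c &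
                       \sum_(x <- L) d x + X = 2 * size L + e].
Proof.
elim: q e => [|x q IHq] e d_pos e_gt0; rewrite ?big_nil ?big_cons /=; first by lia.
move=> size_gt1 sum_q; have [e_lt|e_ge] := ltnP e (d x).
  by exists [::], x, q, e; rewrite big_nil /=; split=> //; lia.
have [||||L [c [Rr [X [-> X_bounds sum_L]]]]] := IHq (e + 2 - d x); try by lia.
  by case/andP: d_pos.
by exists (x :: L), c, Rr, X; rewrite big_cons /=; split=> //; lia.
Qed.

End WeightedSplits.

Section WeightedSums.
Variables (T : eqType) (d : T -> nat).

Lemma exists_le_sum (s : seq T) t : uniq s -> t <= \sum_(x <- s) d x ->
  exists h : T -> nat, {in s, forall x, h x <= d x} /\ \sum_(x <- s) h x = t.
Proof.
elim: s t => [|y s IHs] t.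
  by rewrite big_nil leqn0 => _ /eqP ->; exists d; rewrite big_nil.
rewrite cons_uniq big_cons => /andP[yNs s_uniq] t_le.
have [|h [h_le sum_h]] := IHs (t - d y) s_uniq; first by lia.
exists (fun x => if x == y then minn t (d y) else h x); split.
  by move=> x; rewrite inE; case: eqP => [-> _|_ /h_le //]; rewrite geq_minr.
rewrite big_cons eqxx (eq_big_seq h) ?sum_h; first by lia.
by move=> x xs; case: eqP => // xy; rewrite -xy xs in yNs.
Qed.

Lemma leq_sum_eq_in (s : seq T) (h : T -> nat) : {in s, forall x, h x <= d x} ->
  \sum_(x <- s) d x <= \sum_(x <- s) h x -> {in s, h =1 d}.
Proof.
elim: s => [//|y s IHs] h_le; rewrite !big_cons => sum_le x.
have h_le_s : {in s, forall x, h x <= d x} by move=> z zs; apply: h_le; rewrite inE zs orbT.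
have hy := h_le y (mem_head _ _).
have sum_s : \sum_(z <- s) h z <= \sum_(z <- s) d z.
  by rewrite big_seq [leqRHS]big_seq leq_sum // => z /h_le_s.
rewrite inE => /orP[/eqP -> |xs]; first by lia.
by apply: IHs => //; lia.
Qed.

Lemma sum_leaf_degrees (Rs Bs : seq T) (h : T -> nat) : {in Rs, forall x, x \notin Bs} ->
  2 <= size Bs -> \sum_(x <- Rs) h x = size Bs - 2 ->
  \sum_(v <- Rs ++ Bs) (if v \in Bs then 1 else h v + 2) + 2 = 2 * size (Rs ++ Bs).
Proof.
move=> RsNBs Bs_ge2 sum_h; rewrite big_cat size_cat.
have -> : \sum_(v <- Bs) (if v \in Bs then 1 else h v + 2) = size Bs.
  by rewrite -sum1_size; apply: eq_big_seq => v ->.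
rewrite (eq_big_seq (fun v => h v + 2)) => [|v /RsNBs /negbTE -> //].
rewrite big_split sum_h big_const_seq count_predT iter_addn_0 /=; lia.
Qed.

End WeightedSums.

Section Realization.
Variable R : realType.
Notation point := (point R).
Notation graph := (seq (point * point)).
Local Open Scope ring_scope.

Definition affine (s : point -> R) := forall (a b : point) t,
  s ((1 - t) * a.1 + t * b.1, (1 - t) * a.2 + t * b.2) = (1 - t) * s a + t * s b.

Lemma affineN s : affine s -> affine (fun z => - s z).
Proof. by move=> s_aff a b t; rewrite s_aff; ring. Qed.

Lemma affineD s1 s2 : affine s1 -> affine s2 -> affine (fun z => s1 z + s2 z).
Proof. by move=> s1_aff s2_aff a b t; rewrite s1_aff s2_aff; ring. Qed.

Lemma affine_segment_ge0 s a b x : affine s -> on_segment a b x ->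
  0 <= s a -> 0 <= s b ->
  0 <= s x /\ (s x = 0 -> [\/ x = a, x = b | s a = 0 /\ s b = 0]).
Proof.
move=> s_aff [t [/andP[t_ge0 t_le1] ->]] sa_ge0 sb_ge0; rewrite s_aff.
split=> [|sx0]; first by nra.
have [->|t_neq0] := eqVneq t 0.
  by constructor 1; case: a {sa_ge0 sx0} => a1 a2 /=; congr pair; ring.
have [->|t_neq1] := eqVneq t 1.
  by constructor 2; case: b {sb_ge0 sx0} => b1 b2 /=; congr pair; ring.
have t_gt0 : 0 < t by rewrite lt_def t_neq0.
have t_lt1 : t < 1 by rewrite lt_def eq_sym t_neq1.
by constructor 3; split; nra.
Qed.

Lemma adj_catl (T1 T2 : graph) : subrel (adj T1) (adj (T1 ++ T2)).
Proof. by move=> u v; rewrite /adj !mem_cat => /orP[] ->; rewrite ?orbT. Qed.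

Lemma adj_catr (T1 T2 : graph) : subrel (adj T2) (adj (T1 ++ T2)).
Proof. by move=> u v; rewrite /adj !mem_cat => /orP[] ->; rewrite ?orbT. Qed.

Lemma deg_cat (T1 T2 : graph) v : deg (T1 ++ T2) v = (deg T1 v + deg T2 v)%N.
Proof. exact: count_cat. Qed.

Lemma simple_graph_edge P (T : graph) : simple_graph_on P T ->
  forall e, e \in T -> [/\ e.1 \in P, e.2 \in P & e.1 != e.2].
Proof. by case=> + _ _; apply. Qed.

Lemma deg_notin P (T : graph) v : simple_graph_on P T -> v \notin P -> deg T v = 0%N.
Proof.
move=> T_simple vNP; apply/eqP; rewrite -leqn0 leqNgt -has_count.
apply/hasP => -[e /(simple_graph_edge T_simple) [e1P e2P _] /orP[] /eqP ev].
- by rewrite -ev e1P in vNP.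
- by rewrite -ev e2P in vNP.
Qed.

Definition realizable (P : seq point) (d : point -> nat) :=
  exists T, [/\ spanning_tree P T, non_crossing T & forall v, v \in P -> deg T v = d v].

Definition with_deg (d : point -> nat) (c : point) (k : nat) (v : point) : nat :=
  if v == c then k else d v.

Lemma sum_with_deg_notin (s : seq point) d c k : c \notin s ->
  (\sum_(v <- s) with_deg d c k v = \sum_(v <- s) d v)%N.
Proof.
move=> cNs; apply: eq_big_seq => v vs; rewrite /with_deg.
by case: eqP => // vc; rewrite -vc vs in cNs.
Qed.

Section Glue.
Variables (P P1 P2 : seq point) (c p' : point) (s : point -> R).
Hypotheses (s_affine : affine s) (P_eq : P =i P1 ++ P2)
  (cP1 : c \in P1) (cP2 : c \in P2) (s_c : s c = 0) (s_p' : s p' = 0)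
  (P1_side : forall x, x \in P1 -> [\/ x = c, x = p' | 0 < s x])
  (P2_side : forall x, x \in P2 -> x = c \/ s x < 0).

Lemma s_ge0_P1 x : x \in P1 -> 0 <= s x.
Proof. by case/P1_side=> [->|->|/ltW]; rewrite ?s_c ?s_p'. Qed.

Lemma s_le0_P2 x : x \in P2 -> s x <= 0.
Proof. by case/P2_side=> [->|/ltW]; rewrite ?s_c. Qed.

Lemma s_eq0_P1 x : x \in P1 -> s x = 0 -> x = c \/ x = p'.
Proof. by case/P1_side=> [->|->|/gt_eqF/eqP]; [left|right|]. Qed.

Lemma s_eq0_P2 x : x \in P2 -> s x = 0 -> x = c.
Proof. by case/P2_side=> // /lt_eqF/eqP. Qed.

Lemma P1_P2 x : x \in P1 -> x \in P2 -> x = c.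
Proof.
move=> xP1 xP2; apply: s_eq0_P2 => //.
by apply/eqP; rewrite eq_le s_le0_P2 ?s_ge0_P1.
Qed.

Section GlueTrees.
Variables T1 T2 : graph.
Hypotheses (T1_tree : spanning_tree P1 T1) (T2_tree : spanning_tree P2 T2)
  (T1_nc : non_crossing T1) (T2_nc : non_crossing T2).

Let T1_simple : simple_graph_on P1 T1. Proof. by case: T1_tree. Qed.
Let T2_simple : simple_graph_on P2 T2. Proof. by case: T2_tree. Qed.
Let T1_edge := simple_graph_edge T1_simple.
Let T2_edge := simple_graph_edge T2_simple.

Lemma adj_glue u v : adj (T1 ++ T2) u v ->
  (u \in P1) && (v \in P1) || (u \in P2) && (v \in P2).
Proof.
rewrite /adj !mem_cat => /orP[/orP[]|/orP[]].
- by case/T1_edge => /= -> ->.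
- by case/T2_edge => /= -> ->; rewrite orbT.
- by case/T1_edge => /= -> ->.
- by case/T2_edge => /= -> ->; rewrite orbT.
Qed.

Lemma adj_gluel u v : u \in P1 -> v \in P1 -> adj (T1 ++ T2) u v -> adj T1 u v.
Proof.
move=> uP1 vP1; rewrite /adj !mem_cat => /orP[/orP[]|/orP[]] uv; rewrite ?uv ?orbT //.
- by case/T2_edge: uv => /= uP2 vP2; rewrite (P1_P2 uP1 uP2) (P1_P2 vP1 vP2) eqxx.
- by case/T2_edge: uv => /= vP2 uP2; rewrite (P1_P2 uP1 uP2) (P1_P2 vP1 vP2) eqxx.
Qed.

Lemma adj_gluer u v : u \in P2 -> v \in P2 -> adj (T1 ++ T2) u v -> adj T2 u v.
Proof.
move=> uP2 vP2; rewrite /adj !mem_cat => /orP[/orP[]|/orP[]] uv; rewrite ?uv ?orbT //.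
- by case/T1_edge: uv => /= uP1 vP1; rewrite (P1_P2 uP1 uP2) (P1_P2 vP1 vP2) eqxx.
- by case/T1_edge: uv => /= vP1 uP1; rewrite (P1_P2 uP1 uP2) (P1_P2 vP1 vP2) eqxx.
Qed.

Lemma glue_simple : simple_graph_on P (T1 ++ T2).
Proof.
case: T1_simple T2_simple => [_ T1_uniq T1_asym] [_ T2_uniq T2_asym].
have T1_notin_P2 e : e \in T1 -> e.1 \in P2 -> e.2 \in P2 -> False.
  case/T1_edge=> e1P1 e2P1 e_loop e1P2 e2P2.
  by move: e_loop; rewrite (P1_P2 e1P1 e1P2) (P1_P2 e2P1 e2P2) eqxx.
split.
- move=> e; rewrite !P_eq !mem_cat => /orP[/T1_edge|/T2_edge] [-> -> ->];
    by rewrite ?orbT.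
- rewrite cat_uniq T1_uniq T2_uniq andbT; apply/hasPn => e /T2_edge[e1P2 e2P2 _].
  by apply/negP => eT1; apply: T1_notin_P2 eT1 e1P2 e2P2.
- move=> e; rewrite !mem_cat => /orP[] eT; apply/negP => /orP[] e'T.
  + by rewrite (negbTE (T1_asym _ eT)) in e'T.
  + by case/T2_edge: e'T => /= e2P2 e1P2 _; apply: T1_notin_P2 eT e1P2 e2P2.
  + by case/T2_edge: eT => e1P2 e2P2 _; apply: T1_notin_P2 e'T e2P2 e1P2.
  + by rewrite (negbTE (T2_asym _ eT)) in e'T.
Qed.

Lemma glue_connected : connected_on P (T1 ++ T2).
Proof.
case: T1_tree T2_tree => [_ T1_conn _] [_ T2_conn _].
have path1 x q : path (adj T1) x q -> path (adj (T1 ++ T2)) x q.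
  exact/sub_path/adj_catl.
have path2 x q : path (adj T2) x q -> path (adj (T1 ++ T2)) x q.
  exact/sub_path/adj_catr.
move=> x y; rewrite !P_eq !mem_cat => /orP[xP1|xP2] /orP[yP1|yP2].
- by have [q [xq qy]] := T1_conn x y xP1 yP1; exists q; rewrite path1.
- have [q1 [xq1 q1c]] := T1_conn x c xP1 cP1; have [q2 [cq2 q2y]] := T2_conn c y cP2 yP2.
  exists (q1 ++ q2); rewrite cat_path last_cat q1c.
  by split=> //; apply/andP; split; [apply: path1 | apply: path2].
- have [q1 [xq1 q1c]] := T2_conn x c xP2 cP2; have [q2 [cq2 q2y]] := T1_conn c y cP1 yP1.
  exists (q1 ++ q2); rewrite cat_path last_cat q1c.
  by split=> //; apply/andP; split; [apply: path2 | apply: path1].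
- by have [q [xq qy]] := T2_conn x y xP2 yP2; exists q; rewrite path2.
Qed.

(* Removing [c] from a cycle leaves a path, and the two vertex sets share only [c]. *)
Lemma glue_cycle_side cy : uniq cy -> cycle (adj (T1 ++ T2)) cy ->
  {subset cy <= P1} \/ {subset cy <= P2}.
Proof.
move=> cy_uniq cy_cycle.
have cy_P z : z \in cy -> (z \in P1) || (z \in P2).
  by move/(next_cycle cy_cycle)/adj_glue => /orP[]/andP[-> _]; rewrite ?orbT.
have [q [cy_q q_cy cNq q_sorted]] : exists q, [/\ {subset cy <= c :: q},
    {subset q <= cy}, c \notin q & sorted (adj (T1 ++ T2)) q].
  have [c_cy|cNcy] := boolP (c \in cy); last first.
    exists cy; split=> // [z zcy|]; first by rewrite inE zcy orbT.
    by case: cy cy_cycle {cy_uniq cy_P cNcy} => //= x q; rewrite rcons_path => /andP[].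
  case: (rot_to c_cy) => i q rot_cy.
  have := cy_uniq; rewrite -(rot_uniq i) rot_cy cons_uniq => /andP[cNq _].
  have := cy_cycle; rewrite -(rot_cycle i) rot_cy /= rcons_path => /andP[cq _].
  exists q; split=> //; last exact: path_sorted cq.
  - by move=> z; rewrite -(mem_rot i) rot_cy.
  - by move=> z zq; rewrite -(mem_rot i) rot_cy in_cons zq orbT.
case: q cy_q q_cy cNq q_sorted => [cy_c _ _ _|y q cy_q q_cy cNq yq].
  by left=> z /cy_c; rewrite inE => /eqP ->.
have same_side : {in y :: q &, forall u v,
    adj (T1 ++ T2) u v -> (u \in P1) == (v \in P1)}.
  move=> u v uq vq /adj_glue /orP[/andP[-> ->] //|/andP[uP2 vP2]].
  apply/eqP; apply/idP/idP => [uP1|vP1]; last by rewrite -(P1_P2 vP1 vP2) vq in cNq.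
  by rewrite -(P1_P2 uP1 uP2) uq in cNq.
pose side u v := (u \in P1) == (v \in P1).
have side_trans : transitive side by move=> u v w; rewrite /side => /eqP -> /eqP ->.
have /(order_path_min side_trans) /allP y_q :=
  sub_in_path (P := mem (y :: q)) (e' := side) same_side (allss (y :: q)) yq.
have yq_P1 z : z \in y :: q -> (z \in P1) = (y \in P1).
  by rewrite inE => /orP[/eqP -> //|/y_q /eqP].
have [yP1|yNP1] := boolP (y \in P1); [left|right] => z /cy_q.
  by rewrite inE => /orP[/eqP -> //|/yq_P1 ->].
rewrite inE => /orP[/eqP -> //|zq]; have := cy_P z (q_cy z zq).
by rewrite yq_P1 // (negbTE yNP1).
Qed.

Lemma glue_acyclic : acyclic (T1 ++ T2).
Proof.
case: T1_tree T2_tree => [_ _ T1_acyclic] [_ _ T2_acyclic].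
move=> cy cy_size cy_uniq; apply/negP => cy_cycle.
case: (glue_cycle_side cy_uniq cy_cycle) => /allP cy_sub.
- have/negP := T1_acyclic cy cy_size cy_uniq; apply.
  exact: (sub_in_cycle (P := mem P1) adj_gluel).
- have/negP := T2_acyclic cy cy_size cy_uniq; apply.
  exact: (sub_in_cycle (P := mem P2) adj_gluer).
Qed.

Lemma glue_crossing e1 e2 x : e1 \in T1 -> e2 \in T2 ->
  on_segment e1.1 e1.2 x -> on_segment e2.1 e2.2 x ->
  ((x == e1.1) || (x == e1.2)) && ((x == e2.1) || (x == e2.2)).
Proof.
move=> /T1_edge[e11 e12 e1_loop] /T2_edge[e21 e22 e2_loop] x_e1 x_e2.
have [sx_ge0 sx_e1] := affine_segment_ge0 s_affine x_e1 (s_ge0_P1 e11) (s_ge0_P1 e12).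
have Ns_ge0 z : z \in P2 -> 0 <= - s z by move=> zP2; rewrite oppr_ge0 s_le0_P2.
have [sx_le0 sx_e2] :=
  affine_segment_ge0 (affineN s_affine) x_e2 (Ns_ge0 _ e21) (Ns_ge0 _ e22).
have sx0 : s x = 0 by apply/eqP; rewrite eq_le -oppr_ge0 sx_le0 sx_ge0.
have x_e2_end : (x == e2.1) || (x == e2.2).
  case: sx_e2 => [|->|->|[]]; rewrite ?sx0 ?oppr0 ?eqxx ?orbT //.
  move=> /eqP; rewrite oppr_eq0 => /eqP/(s_eq0_P2 e21) E1.
  move=> /eqP; rewrite oppr_eq0 => /eqP/(s_eq0_P2 e22) E2.
  by rewrite E1 E2 eqxx in e2_loop.
have xc : x = c by apply: s_eq0_P2 sx0; case/orP: x_e2_end => /eqP ->.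
rewrite x_e2_end andbT; case: (sx_e1 sx0) => [->|->|[s1 s2]]; rewrite ?eqxx ?orbT //.
rewrite xc; case: (s_eq0_P1 e11 s1) => [<-|E1]; first by rewrite eqxx.
case: (s_eq0_P1 e12 s2) => [<-|E2]; first by rewrite eqxx orbT.
by rewrite E1 E2 eqxx in e1_loop.
Qed.

Lemma glue_non_crossing : non_crossing (T1 ++ T2).
Proof.
move=> e1 e2; rewrite !mem_cat => /orP[] e1T /orP[] e2T e12 x x_e1 x_e2.
- exact: T1_nc.
- exact: glue_crossing.
- by rewrite andbC; apply: glue_crossing.
- exact: T2_nc.
Qed.

Lemma glue_spanning_tree : spanning_tree P (T1 ++ T2).
Proof. by split; [apply: glue_simple | apply: glue_connected | apply: glue_acyclic]. Qed.

End GlueTrees.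

Lemma realizable_glue d k1 k2 :
  realizable P1 (with_deg d c k1) -> realizable P2 (with_deg d c k2) ->
  (k1 + k2 = d c)%N -> realizable P d.
Proof.
move=> [T1 [T1_tree T1_nc T1_deg]] [T2 [T2_tree T2_nc T2_deg]] d_c.
exists (T1 ++ T2); split.
- exact: glue_spanning_tree.
- exact: glue_non_crossing.
move=> v; rewrite deg_cat P_eq mem_cat.
have [-> _|vNc /orP[vP1|vP2]] := eqVneq v c.
  by rewrite T1_deg ?T2_deg // /with_deg eqxx.
- have vNP2 : v \notin P2 by apply: contra vNc => vP2; rewrite (P1_P2 vP1 vP2).
  rewrite T1_deg // (@deg_notin P2) ?addn0 /with_deg ?(negbTE vNc) //.
  by case: T2_tree.
- have vNP1 : v \notin P1 by apply: contra vNc => vP1; rewrite (P1_P2 vP1 vP2).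
  rewrite T2_deg // (@deg_notin P1) /with_deg ?(negbTE vNc) //.
  by case: T1_tree.
Qed.

End Glue.

Lemma realizable_pair a b (d : point -> nat) : a != b -> d a = 1%N -> d b = 1%N ->
  realizable [:: a; b] d.
Proof.
move=> ab da db; exists [:: (a, b)]; split.
- split.
  + split=> // e; rewrite mem_seq1 => /eqP -> /=; first by rewrite !inE !eqxx ab orbT.
    by rewrite mem_seq1; apply: contra ab => /eqP[->].
  + move=> x y; rewrite !inE => /orP[] /eqP -> /orP[] /eqP ->.
    * by exists [::].
    * by exists [:: b]; rewrite /= /adj inE eqxx.
    * by exists [:: a]; rewrite /= /adj !inE eqxx orbT.
    * by exists [::].
  + move=> cy cy_size cy_uniq; apply/negP => cy_cycle.
    suff : {subset cy <= [:: a; b]} by move/(uniq_leq_size cy_uniq); rewrite leqNgt cy_size.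
    move=> x /(next_cycle cy_cycle); rewrite /adj !mem_seq1.
    by case/orP => /eqP[] => [-> _|_ ->]; rewrite !inE eqxx ?orbT.
- by move=> e1 e2; rewrite !mem_seq1 => /eqP -> /eqP ->; rewrite eqxx.
- by move=> v; rewrite !inE /deg /= => /orP[] /eqP ->; rewrite eqxx ?orbT ?da ?db.
Qed.

Definition orient (o a b : point) : R :=
  (a.1 - o.1) * (b.2 - o.2) - (a.2 - o.2) * (b.1 - o.1).

Lemma collinear_orient a b c : collinear a b c = (orient a b c == 0).
Proof. by []. Qed.

Lemma orient_swap o a b : orient o b a = - orient o a b.
Proof. by rewrite /orient; ring. Qed.

Lemma orient_same o a : orient o a a = 0.
Proof. by rewrite /orient; ring. Qed.

Lemma orient_origin o a : orient o o a = 0.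
Proof. by rewrite /orient; ring. Qed.

Lemma orient_affine o a : affine (fun z => orient o z a).
Proof. by move=> u v t; rewrite /orient /=; ring. Qed.

Definition lex_lt (a b : point) : bool := (a.1 < b.1) || ((a.1 == b.1) && (a.2 < b.2)).

Lemma lex_lt_trans : transitive lex_lt.
Proof.
move=> b a c; rewrite /lex_lt => /orP[ab|/andP[/eqP ab1 ab2]] /orP[bc|/andP[/eqP bc1 bc2]].
- by rewrite (lt_trans ab bc).
- by rewrite -bc1 ab.
- by rewrite ab1 bc.
- by rewrite ab1 bc1 eqxx (lt_trans ab2 bc2) orbT.
Qed.

Lemma lex_lt_total a b : a != b -> lex_lt a b || lex_lt b a.
Proof.
case: a b => a1 a2 [b1 b2]; rewrite /lex_lt /= xpair_eqE negb_and.
by case: (ltgtP a1 b1) => //= _; case: ltgtP.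
Qed.

Lemma exists_lex_min (P : seq point) : P != [::] ->
  exists2 p, p \in P & {in P, forall x, x != p -> lex_lt p x}.
Proof.
elim: P => // x P IHP _; have [->|/IHP[p pP p_min]] := eqVneq P [::].
  by exists x; rewrite ?inE // => y; rewrite inE => ->.
have [xp|xNp] := boolP (lex_lt x p).
  exists x; first exact: mem_head.
  move=> y; rewrite inE => /orP[/eqP ->|yP _]; first by rewrite eqxx.
  by have [-> //|yNp] := eqVneq y p; apply: lex_lt_trans xp (p_min y yP yNp).
exists p; first by rewrite inE pP orbT.
move=> y; rewrite inE => /orP[/eqP -> x_neq_p|]; last exact: p_min.
by have := lex_lt_total x_neq_p; rewrite (negbTE xNp).
Qed.

(* Seen from [o], the points lexicographically after [o] fill a half-plane, on
   which [orient o] is a total preorder. *)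
Lemma orient_trans o a b c : lex_lt o a -> lex_lt o b -> lex_lt o c ->
  0 <= orient o a b -> 0 <= orient o b c -> 0 <= orient o a c.
Proof.
rewrite /lex_lt /orient => oa ob oc ab bc.
have a1 : 0 <= a.1 - o.1 by case/orP: oa => [|/andP[/eqP ->]]; lra.
have c1 : 0 <= c.1 - o.1 by case/orP: oc => [|/andP[/eqP ->]]; lra.
have plucker : (b.1 - o.1) * ((a.1 - o.1) * (c.2 - o.2) - (a.2 - o.2) * (c.1 - o.1)) =
    ((a.1 - o.1) * (b.2 - o.2) - (a.2 - o.2) * (b.1 - o.1)) * (c.1 - o.1) +
    ((b.1 - o.1) * (c.2 - o.2) - (b.2 - o.2) * (c.1 - o.1)) * (a.1 - o.1) by ring.
case/orP: ob => [ob|/andP[/eqP ob1 ob2]].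
  have : 0 <= (b.1 - o.1) * ((a.1 - o.1) * (c.2 - o.2) - (a.2 - o.2) * (c.1 - o.1)).
    by rewrite plucker addr_ge0 // mulr_ge0.
  by rewrite pmulr_rge0 // subr_gt0.
rewrite -ob1 subrr mul0r sub0r oppr_ge0 in bc.
have {}c1 : c.1 - o.1 = 0.
  by apply/eqP; rewrite eq_le c1 andbT -(pmulr_rle0 _ (_ : 0 < b.2 - o.2)) ?subr_gt0.
have c2 : 0 < c.2 - o.2 by case/orP: oc => [|/andP[_]]; rewrite ?subr_gt0 //; lra.
by rewrite c1 mulr0 subr0 mulr_ge0 // ltW.
Qed.

Lemma angular_sort (P : seq point) p : uniq P -> no_three_collinear P -> p \in P ->
  {in P, forall x, x != p -> lex_lt p x} ->
  exists q : seq point, perm_eq P (p :: q) /\ pairwise (fun x y => 0 < orient p x y) q.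
Proof.
move=> P_uniq P_ntc pP p_min.
pose le x y := 0 <= orient p x y.
pose q := sort le (rem p P).
have q_perm : perm_eq (rem p P) q by rewrite perm_sym perm_sort.
have mem_q x : (x \in q) = (x != p) && (x \in P).
  by rewrite -(perm_mem q_perm) (mem_rem_uniq _ P_uniq) inE.
exists q; split.
  by apply: perm_trans (perm_to_rem pP) _; rewrite perm_cons.
have q_le : pairwise le q.
  have q_lex : all (lex_lt p) q.
    by apply/allP => x; rewrite mem_q => /andP[xNp xP]; apply: p_min.
  have le_trans : {in lex_lt p & &, transitive le}.
    by move=> y x z py px pz; apply: orient_trans.
  rewrite -(sorted_pairwise_in le_trans q_lex).
  by apply: sort_sorted => x y; rewrite /le orient_swap oppr_ge0 le_total.
have q_uniq : uniq q by rewrite -(perm_uniq q_perm) rem_uniq.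
have : pairwise le q && uniq q by rewrite q_le q_uniq.
rewrite uniq_pairwise -pairwise_relI.
apply: sub_in_pairwise (allss q) => x y; rewrite !mem_q => /andP[xNp xP] /andP[yNp yP].
move=> /andP[le_xy xNy]; rewrite lt_def andbC; apply/andP; split=> //.
by rewrite -collinear_orient; apply: P_ntc; rewrite // eq_sym.
Qed.

Lemma angular_cat p L c Rr : pairwise (fun x y => 0 < orient p x y) (L ++ c :: Rr) ->
  {in L, forall x, 0 < orient p x c} /\ {in Rr, forall x, orient p x c < 0}.
Proof.
rewrite pairwise_cat => /and3P[/allP L_c _ /andP[/allP c_Rr _]]; split.
  by move=> x /L_c /andP[].
by move=> x /c_Rr; rewrite orient_swap oppr_gt0.
Qed.

Section Split.
Variables (P q : seq point) (p : point) (d : point -> nat).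
Hypotheses (P_eq : P =i p :: q) (pq_uniq : uniq (p :: q))
  (q_angular : pairwise (fun x y => 0 < orient p x y) q)
  (d_pos : {in P, forall v, 0 < d v}%N)
  (d_sum : (d p + \sum_(v <- q) d v = 2 * size q)%N)
  (IH : forall (P' : seq point) d', subseq P' (p :: q) ->
     (size P' <= size q)%N -> (2 <= size P')%N -> {in P', forall v, 0 < d' v}%N ->
     (\sum_(v <- P') d' v + 2 = 2 * size P')%N -> realizable P' d').

Lemma realizable_with_deg (P' : seq point) c k : subseq P' (p :: q) ->
  (size P' <= size q)%N -> (2 <= size P')%N -> (0 < k)%N ->
  (\sum_(v <- P') with_deg d c k v + 2 = 2 * size P')%N -> realizable P' (with_deg d c k).
Proof.
move=> P'_sub P'_le P'_ge2 k_gt0; apply: IH => // v vP'; rewrite /with_deg.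
by case: eqP => // _; apply: d_pos; rewrite P_eq (mem_subseq P'_sub).
Qed.

Lemma p_notin_q : p \notin q.
Proof. by case/andP: pq_uniq. Qed.

Lemma realizable_split_leaf (L Rr : seq point) a b : q = L ++ a :: b :: Rr -> (2 <= d p)%N ->
  (\sum_(v <- L) d v = 2 * size L)%N -> d a = 1%N -> realizable P d.
Proof.
move=> q_eq dp_ge2 sum_L da; have := p_notin_q; rewrite q_eq => pNq.
have := q_angular; rewrite q_eq => /angular_cat [L_a Rr_a].
have := q_angular; rewrite q_eq -cat1s catA => /angular_cat [La_b Rr_b].
move: d_sum; rewrite q_eq big_cat !big_cons size_cat /= => sum_q.
pose s z := orient p z a + orient p z b.
have ab : 0 < orient p a b by apply: La_b; rewrite mem_cat mem_head orbT.
apply: (@realizable_glue P (p :: L ++ [:: a]) (p :: b :: Rr) p p s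
  _ _ _ _ _ _ _ _ d 1 (d p - 1)).
- exact: affineD (orient_affine p a) (orient_affine p b).
- move=> x; rewrite P_eq q_eq !(inE, mem_cat) ?orbF.
  by case: (x == p); case: (x \in L); case: (x == a); case: (x == b).
- exact: mem_head.
- exact: mem_head.
- by rewrite /s !orient_origin addr0.
- by rewrite /s !orient_origin addr0.
- move=> x; rewrite !(inE, mem_cat) ?orbF => /or3P[/eqP ->|xL|/eqP ->].
  + by constructor 1.
  + by constructor 3; rewrite addr_gt0 ?L_a ?La_b ?mem_cat ?xL.
  + by constructor 3; rewrite /s orient_same add0r.
- move=> x; rewrite !inE => /or3P[/eqP ->|/eqP ->|xRr].
  + by left.
  + by right; rewrite /s orient_same addr0 orient_swap oppr_lt0.
  + right; rewrite -oppr_gt0 opprD addr_gt0 // oppr_gt0 ?Rr_b //.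
    by apply: Rr_a; rewrite inE xRr orbT.
- apply: realizable_with_deg => //.
  + by rewrite q_eq /= eqxx; apply: cat_subseq (subseq_refl L) (prefix_subseq [:: a] _).
  + by rewrite q_eq /= !size_cat /=; lia.
  + by rewrite /= size_cat /=; lia.
  + rewrite big_cons /with_deg eqxx sum_with_deg_notin; last first.
      by apply: contra pNq; rewrite !(mem_cat, inE) ?orbF => /orP[] ->; rewrite ?orbT.
    by rewrite big_cat big_seq1 /= size_cat /=; lia.
- apply: realizable_with_deg => //.
  + by rewrite q_eq /= eqxx -(cat1s a) catA suffix_subseq.
  + by rewrite q_eq /= !size_cat /=; lia.
  + by lia.
  + rewrite big_cons /with_deg eqxx sum_with_deg_notin; last first.
      by apply: contra pNq; rewrite !(mem_cat, inE) => /orP[] ->; rewrite ?orbT.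
    by rewrite big_cons /=; lia.
- by lia.
Qed.

Lemma realizable_split_first c (Rr : seq point) : q = c :: Rr -> Rr != [::] ->
  d p = 1%N -> (2 <= d c)%N -> realizable P d.
Proof.
move=> q_eq Rr_nil dp dc_ge2.
have := pq_uniq; rewrite q_eq /= inE negb_or => /andP[/andP[pNc _] /andP[cNRr _]].
have := q_angular; rewrite q_eq -[c :: Rr]cat0s => /angular_cat [_ Rr_c].
move: d_sum; rewrite q_eq big_cons /= => sum_q.
apply: (@realizable_glue P [:: p; c] (c :: Rr) c p (fun z => orient p z c)
  _ _ _ _ _ _ _ _ d 1 (d c - 1)).
- exact: orient_affine.
- by move=> x; rewrite P_eq q_eq !inE; case: (x == p); case: (x == c).
- by rewrite !inE eqxx orbT.
- exact: mem_head.
- exact: orient_same.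
- exact: orient_origin.
- by move=> x; rewrite !inE => /orP[] /eqP ->; [constructor 2 | constructor 1].
- by move=> x; rewrite inE => /orP[/eqP ->|/Rr_c]; [left | right].
- by apply: realizable_pair; rewrite // /with_deg ?eqxx // (negbTE pNc).
- apply: realizable_with_deg => //.
  + by rewrite q_eq subseq_cons.
  + by rewrite q_eq.
  + by rewrite /= ltnS lt0n size_eq0.
  + by lia.
  + by rewrite big_cons /with_deg eqxx sum_with_deg_notin //=; lia.
- by lia.
Qed.

Lemma realizable_split_inner (L Rr : seq point) c X : q = L ++ c :: Rr -> L != [::] ->
  d p = 1%N -> (0 < X < d c)%N -> (\sum_(v <- L) d v + X = 2 * size L)%N ->
  realizable P d.
Proof.
move=> q_eq L_nil dp X_bounds sum_L.
have := p_notin_q; rewrite q_eq => pNq.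
have pNc : p != c by apply: contra pNq => /eqP ->; rewrite mem_cat mem_head orbT.
have := pq_uniq; rewrite q_eq cons_uniq cat_uniq /=.
move=> /andP[_ /and3P[_ /norP[cNL _] /andP[cNRr _]]].
have := q_angular; rewrite q_eq => /angular_cat [L_c Rr_c].
move: d_sum; rewrite q_eq big_cat big_cons size_cat /= => sum_q.
have L_size : (0 < size L)%N by rewrite lt0n size_eq0.
apply: (@realizable_glue P (p :: c :: Rr) (L ++ [:: c]) c p (fun z => - orient p z c)
  _ _ _ _ _ _ _ _ d (d c - X) X).
- exact/affineN/orient_affine.
- move=> x; rewrite P_eq q_eq !(inE, mem_cat).
  by case: (x == p); case: (x \in L); case: (x == c); case: (x \in Rr).
- by rewrite !inE eqxx orbT.
- by rewrite mem_cat mem_head orbT.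
- by rewrite orient_same oppr0.
- by rewrite orient_origin oppr0.
- move=> x; rewrite !inE => /or3P[/eqP ->|/eqP ->|/Rr_c xc].
  + by constructor 2.
  + by constructor 1.
  + by constructor 3; rewrite oppr_gt0.
- move=> x; rewrite mem_cat mem_seq1 => /orP[/L_c xc|/eqP ->]; last by left.
  by right; rewrite oppr_lt0.
- apply: realizable_with_deg => //.
  + by rewrite q_eq /= eqxx suffix_subseq.
  + by rewrite q_eq /= size_cat /=; lia.
  + by lia.
  + rewrite !big_cons /with_deg eqxx (negbTE pNc) sum_with_deg_notin //=; lia.
- apply: realizable_with_deg => //.
  + rewrite q_eq; apply: subseq_trans (subseq_cons _ p).
    exact: cat_subseq (subseq_refl L) (prefix_subseq [:: c] Rr).
  + by rewrite q_eq !size_cat /=; lia.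
  + by rewrite size_cat /=; lia.
  + by lia.
  + by rewrite big_cat big_seq1 /with_deg eqxx sum_with_deg_notin // size_cat /=; lia.
- by lia.
Qed.

Lemma realizable_angular : (2 <= size q)%N -> realizable P d.
Proof.
move=> q_ge2; have d_pos_q : all (fun x => 0 < d x)%N q.
  by apply/allP => x xq; apply: d_pos; rewrite P_eq inE xq orbT.
have [dp_ge2|dp_lt2] := leqP 2 (d p).
  have [L [a [b [Rr [q_eq sum_L da]]]]] := split_at_leaf d_pos_q dp_ge2 d_sum.
  exact: realizable_split_leaf q_eq dp_ge2 sum_L da.
have dp_gt0 : (0 < d p)%N by apply: d_pos; rewrite P_eq mem_head.
have dp : d p = 1%N by lia.
case q_eq : q q_ge2 d_pos_q => [|c0 q'] //= q'_gt0 /andP[dc0_gt0 d_pos_q'].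
have [dc0_ge2|dc0_lt2] := leqP 2 (d c0).
  by apply: realizable_split_first q_eq _ dp dc0_ge2; rewrite -size_eq0 -lt0n.
have [||L [c [Rr [X [q'_eq X_bounds sum_L]]]]] := split_at_deficit d_pos_q' (ltn0Sn 0).
- by lia.
- by move: d_sum; rewrite q_eq big_cons /=; lia.
apply: (realizable_split_inner (L := c0 :: L)) dp X_bounds _ => //.
- by rewrite q_eq q'_eq.
- by rewrite big_cons /=; lia.
Qed.

End Split.

Theorem realizable_degrees (P : seq point) (d : point -> nat) :
  uniq P -> no_three_collinear P -> (2 <= size P)%N -> {in P, forall v, 0 < d v}%N ->
  (\sum_(v <- P) d v + 2 = 2 * size P)%N -> realizable P d.
Proof.
have [n] := ubnP (size P); elim: n P d => // n IHn P d P_lt P_uniq P_ntc P_ge2 d_pos d_sum.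
have [P_le2|P_gt2] := leqP (size P) 2.
  case: P P_uniq P_le2 P_ge2 d_pos d_sum {IHn P_lt P_ntc} => [|a [|b []]] //= P_uniq _ _.
  rewrite !big_cons big_nil => d_pos d_sum.
  have da_gt0 : (0 < d a)%N by apply: d_pos; rewrite mem_head.
  have db_gt0 : (0 < d b)%N by apply: d_pos; rewrite !inE eqxx orbT.
  by apply: realizable_pair; [rewrite mem_seq1 andbT in P_uniq | lia | lia].
have [p pP p_min] : exists2 p, p \in P & {in P, forall x, x != p -> lex_lt p x}.
  by apply: exists_lex_min; apply/eqP => P_nil; rewrite P_nil in P_gt2.
have [q [P_perm q_angular]] := angular_sort P_uniq P_ntc pP p_min.
have P_eq : P =i p :: q := perm_mem P_perm.
have pq_uniq : uniq (p :: q) by rewrite -(perm_uniq P_perm).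
have size_P : size P = (size q).+1 by rewrite (perm_size P_perm).
have sum_q : (d p + \sum_(v <- q) d v = 2 * size q)%N.
  move: d_sum; rewrite (perm_big _ P_perm) big_cons size_P /=.
  by set S := (\sum_(v <- q) d v)%N; lia.
have IH (P' : seq point) d' : subseq P' (p :: q) -> (size P' <= size q)%N ->
    (2 <= size P')%N -> {in P', forall v, 0 < d' v}%N ->
    (\sum_(v <- P') d' v + 2 = 2 * size P')%N -> realizable P' d'.
  move=> P'_sub P'_le; apply: IHn; first by lia.
  - exact: subseq_uniq P'_sub pq_uniq.
  - by move=> a b c aP' bP' cP'; apply: P_ntc; rewrite P_eq; apply: (mem_subseq P'_sub).
by apply: (realizable_angular P_eq pq_uniq q_angular d_pos sum_q IH); lia.
Qed.

End Realization.

Theorem theorem1 (R : realType) (Rs Bs : seq (point R)) (f : point R -> nat) :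
  uniq Rs -> uniq Bs -> (forall x, x \in Rs -> x \notin Bs) ->
  no_three_collinear (Rs ++ Bs) ->
  (forall x, x \in Rs -> (2 <= f x)%N) ->
  (2 <= size Bs)%N ->
  (size Bs <= \sum_(x <- Rs) (f x - 2) + 2)%N ->
  exists T : seq (point R * point R),
    [/\ spanning_tree (Rs ++ Bs) T,
        non_crossing T,
        (forall v, v \in Rs ++ Bs -> (deg T v == 1%N) = (v \in Bs)),
        (forall x, x \in Rs -> (2 <= deg T x <= f x)%N) &
        (size Bs = \sum_(x <- Rs) (f x - 2) + 2)%N ->
          forall x, x \in Rs -> deg T x = f x].
Proof.
move=> Rs_uniq Bs_uniq RsNBs ntc f_ge2 Bs_ge2 Bs_le.
have excess_le : size Bs - 2 <= \sum_(x <- Rs) (f x - 2) by lia.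
have [h [h_le sum_h]] : exists h : point R -> nat,
    {in Rs, forall x, h x <= f x - 2} /\ \sum_(x <- Rs) h x = size Bs - 2.
  exact: exists_le_sum Rs_uniq excess_le.
pose d v := if v \in Bs then 1 else h v + 2.
have d_Rs x : x \in Rs -> d x = h x + 2 by move=> /RsNBs xNBs; rewrite /d (negbTE xNBs).
have [T [T_tree T_nc T_deg]] : realizable (Rs ++ Bs) d.
  apply: realizable_degrees => //.
  - rewrite cat_uniq Rs_uniq Bs_uniq andbT; apply/hasPn => x xBs.
    by apply: contraL xBs; apply: RsNBs.
  - by rewrite size_cat; lia.
  - by move=> v _; rewrite /d addn2; case: ifP.
  - exact: sum_leaf_degrees RsNBs Bs_ge2 sum_h.
exists T; split=> //.
- by move=> v vP; rewrite T_deg // /d addn2; case: ifP.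
- move=> x xRs; rewrite T_deg ?mem_cat ?xRs // d_Rs //.
  by have := h_le x xRs; have := f_ge2 x xRs; lia.
- move=> Bs_eq; have excess_ge : \sum_(x <- Rs) (f x - 2) <= \sum_(x <- Rs) h x.
    by rewrite sum_h; lia.
  move=> x xRs; rewrite T_deg ?mem_cat ?xRs // d_Rs //.
  have := leq_sum_eq_in h_le excess_ge xRs; have := f_ge2 x xRs; lia.
Qed.
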